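(* Consider the interleaved updating scheme in which, for every round $k$, agent $i$ and micro-step $j\in\{0,\dots,K_i-1\}$, the update is $\pi^i_{k,j+1}\in\arg\max_{\hat\pi^i}F_{k,i,j}(\hat\pi^i)$ (maximum over all policies of agent $i$, assumed attained). Then every micro-step satisfies $F_{k,i,j}(\pi^i_{k,j+1})\ge 0$, and for every round $k$, $J(\pi_{k+1})\ge J(\pi_k)$.
   Context: Cooperative Markov game $\langle \mathcal N,\mathcal S,\mathcal A,r,P,d\rangle$ with agents $\mathcal N=[n]=\{1,\dots,n\}$, finite state space $\mathcal S$, finite per-agent action spaces $\mathcal A^i$, joint action space $\mathcal A=\prod_i\mathcal A^i$, bounded joint reward $r:\mathcal S\times\mathcal A\to\mathbb R$, transition kernel $P(\cdot\mid s,a)$, initial distribution $d$, discount $\gamma\in[0,1)$. A policy of agent $i$ is a map $\pi^i(\cdot\mid s)\in\Delta(\mathcal A^i)$; a joint policy $\pi=(\pi^i)_i$ acts by $\pi(a\mid s)=\prod_i\pi^i(a^i\mid s)$; write $a=(a^{-i},a^i)$, $\pi^{-i}=(\pi^r)_{r\ne i}$. Return: $J(\pi)=\mathbb E_\pi[\sum_{t\ge0}\gamma^t r(s_t,a_t)]$ with $s_0\sim d$, $a_t\sim\pi(\cdot\mid s_t)$, $s_{t+1}\sim P(\cdot\mid s_t,a_t)$. Value $V_\pi(s)$ and action value $Q_\pi(s,a)$ are the expected discounted returns conditioned on $s_0=s$ (resp. $s_0=s,a_0=a$); joint advantage $A_\pi(s,a)=Q_\pi(s,a)-V_\pi(s)$.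 Single-agent advantage: $Q^i_\pi(s,a^i)=\mathbb E_{a^{-i}\sim\pi^{-i}(\cdot\mid s)}[Q_\pi(s,(a^{-i},a^i))]$, $A^i_\pi(s,a^i)=Q^i_\pi(s,a^i)-V_\pi(s)$. Discounted state visitation: $\rho_\pi(s)=\sum_{t\ge0}\gamma^t\Pr_\pi(s_t=s)$. Interleaved scheme: rounds $k=0,1,2,\dots$; $\pi_k=(\pi^i_k)_i$ is the joint policy at the start of round $k$ ($\pi_0$ arbitrary). Within round $k$ agents are processed in order $i=1,\dots,n$; agent $i$ performs $K_i\ge1$ micro-steps $j=0,\dots,K_i-1$ producing iterates $\pi^i_{k,0}=\pi^i_k,\pi^i_{k,1},\dots,\pi^i_{k,K_i}$, and then $\pi^i_{k+1}:=\pi^i_{k,K_i}$. Complement policy: $\tau^{-i}_k:=(\{\pi^r_{k+1}\}_{r<i},\{\pi^r_k\}_{r>i})$; baseline joint policy $\Pi_{k,i,j}:=(\tau^{-i}_k,\pi^i_{k,j})$. Surrogate: for a policy $\hat\pi^i$ of agent $i$, $L^i_{\Pi_{k,i,j}}(\tau^{-i}_k,\hat\pi^i):=\sum_{s}\rho_{\Pi_{k,i,j}}(s)\sum_{a^i}\hat\pi^i(a^i\mid s)\,A^i_{\Pi_{k,i,j}}(s,a^i)$. Constants: $\varepsilon_{k,i,j}=\max_{s,a}|A_{\Pi_{k,i,j}}(s,a)|$, $C_{k,i,j}=\frac{4\gamma\varepsilon_{k,i,j}}{(1-\gamma)^2}$. Max conditional KL: $D^{\max}_{\mathrm{KL}}(\mu,\nu)=\sup_s\mathrm{KL}(\mu(\cdot\mid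 s)\,\|\,\nu(\cdot\mid s))$. Micro-step objective: $F_{k,i,j}(\hat\pi^i):=L^i_{\Pi_{k,i,j}}(\tau^{-i}_k,\hat\pi^i)-C_{k,i,j}\,D^{\max}_{\mathrm{KL}}(\pi^i_{k,j},\hat\pi^i)$. *)

From HB Require Import structures.
From mathcomp Require Import all_boot all_order all_algebra.
From mathcomp Require Import all_classical all_reals all_analysis.
Unset Printing Implicit Defensive.
Import Order.TTheory GRing.Theory Num.Theory.
Local Open Scope ring_scope.

Notation jact A := {dffun forall i, A i}.
(* a policy of agent i: p s a^i = pi^i(a^i | s) *)
Notation apol R S A i := (S -> A i -> R) (only parsing).
Notation jpol R S A := (forall i, S -> A i -> R) (only parsing).

Section MarkovGame.
Variables (R : realType) (S : finType) (n : nat) (A : 'I_n -> finType).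

Definition is_policy (i : 'I_n) (p : apol R S A i) : Prop :=
  forall s, (forall a, 0 <= p s a) /\ \sum_(a : A i) p s a = 1.

Definition jprob (p : jpol R S A) (s : S) (a : jact A) : R := \prod_(i < n) p i s (a i).

Variables (r : S -> jact A -> R) (P : S -> jact A -> S -> R) (d : S -> R) (gamma : R).

(* state distribution Pr_pi(s_t = .) when s_0 ~ mu0 *)
Fixpoint stdist (p : jpol R S A) (mu0 : S -> R) (t : nat) : S -> R :=
  match t with
  | 0 => mu0
  | t'.+1 => fun s' => \sum_(s : S) stdist p mu0 t' s *
                        \sum_(a : jact A) jprob p s a * P s a s'
  end.

(* expected discounted return E_pi[sum_t gamma^t r(s_t,a_t)] with s_0 ~ mu0 *)
Definition ret (p : jpol R S A) (mu0 : S -> R) : R :=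
  \big[+%R/0%R]_(0 <= t <oo)
     (gamma ^+ t * \sum_(s : S) stdist p mu0 t s *
                    \sum_(a : jact A) jprob p s a * r s a).

Definition J (p : jpol R S A) : R := ret p d.

Definition V (p : jpol R S A) (s : S) : R := ret p (fun s' => (s' == s)%:R).

(* conditioned on s_0 = s, a_0 = a: reward r(s,a) then s_1 ~ P(.|s,a), p onwards *)
Definition Q (p : jpol R S A) (s : S) (a : jact A) : R := r s a + gamma * ret p (P s a).

Definition Adv (p : jpol R S A) (s : S) (a : jact A) : R := Q p s a - V p s.

Definition Qi (p : jpol R S A) (i : 'I_n) (s : S) (ai : A i) : R :=
  \sum_(a : jact A | a i == ai) (\prod_(q < n | q != i) p q s (a q)) * Q p s a.

Definition Ai (p : jpol R S A) (i : 'I_n) (s : S) (ai : A i) : R := Qi p i s ai - V p s.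

Definition rho (p : jpol R S A) (s : S) : R :=
  \big[+%R/0%R]_(0 <= t <oo) (gamma ^+ t * stdist p d t s).

Definition surr (p : jpol R S A) (i : 'I_n) (phat : apol R S A i) : R :=
  \sum_(s : S) rho p s * \sum_(ai : A i) phat s ai * Ai p i s ai.

Definition eps (p : jpol R S A) : R :=
  \big[Num.max/0]_(s : S) \big[Num.max/0]_(a : jact A) `|Adv p s a|.

Definition Cst (p : jpol R S A) : R := 4 * gamma * eps p / (1 - gamma) ^+ 2.

(* KL(mu || nu) on a finite type, in the extended reals:
   0 log(0/.) = 0, and mu a > 0 = nu a gives +oo *)
Definition KL (T : finType) (mu nu : T -> R) : \bar R :=
  \big[adde/0%E]_(a : T)
     (if mu a == 0%R then 0%E
      else if nu a == 0%R then +oo%E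
      else EFin (mu a * ln (mu a / nu a))).

Definition DmaxKL (i : 'I_n) (mu nu : apol R S A i) : \bar R :=
  \big[maxe/-oo%E]_(s : S) KL (A i) (mu s) (nu s).

Definition Fobj (Pi : jpol R S A) (i : 'I_n) (phat : apol R S A i) : \bar R :=
  ((surr Pi i phat)%:E - (Cst Pi)%:E * DmaxKL i (Pi i) phat)%E.

(* interleaved scheme: pik k = pi_k, micro k i j = p^i_{k,j} *)
Definition compl (pik : nat -> jpol R S A) (k : nat) (i : 'I_n) : jpol R S A :=
  fun q => if (q < i)%N then pik k.+1 q else pik k q.

Definition baseline (pik : nat -> jpol R S A) (micro : nat -> forall q : 'I_n, nat -> apol R S A q)
  (k : nat) (i : 'I_n) (j : nat) : jpol R S A :=
  fun q => if q == i then micro k q j else compl pik k i q.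
End MarkovGame.

Arguments is_policy {R S n A i} p.
Arguments J {R S n A} r P d gamma p.
Arguments Fobj {R S n A} r P d gamma Pi i phat.
Arguments baseline {R S n A} pik micro k i j.

(* Every micro-step of agent i is a unilateral deviation q of the baseline joint
   policy p.  The performance-difference identity expresses J q - J p through the
   discounted occupancy measure of q; comparing that measure with the one of p
   (a perturbation bound for discounted Markov chains) yields the trust-region
   bound J q - J p >= L_p(q) - C D^2 / 4, where D is the largest L1 distance
   between the action distributions of p and q.  Since only agent i moves, L_p(q)
   is the single-agent surrogate and D is the L1 distance between the policies of
   agent i, so Pinsker's inequality (through the Hellinger distance) gives
   D^2 / 4 <= D_KL^max, whence J q - J p >= F(q).  The current policy is feasible
   with F = 0, so the maximizer has F >= 0; chaining the micro-steps of all agents in a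
   round gives J(pi_(k+1)) >= J(pi_k). *)

From HB Require Import structures.
From mathcomp Require Import all_boot all_order all_algebra.
From mathcomp Require Import all_classical all_reals all_analysis.
From mathcomp Require Import ring lra.
Import Order.TTheory GRing.Theory Num.Theory.
Import numFieldNormedType.Exports.
Local Open Scope classical_set_scope.
Local Open Scope ring_scope.

Lemma sqr_sum_mul_le {R : realFieldType} {T : finType} (x y : T -> R) :
  (\sum_i x i * y i) ^+ 2 <= (\sum_i x i ^+ 2) * (\sum_i y i ^+ 2).
Proof.
set Sx := \sum_i x i ^+ 2; set Sy := \sum_i y i ^+ 2; set Sxy := \sum_i x i * y i.
have SxSy : \sum_i \sum_j x i ^+ 2 * y j ^+ 2 = Sx * Sy.
  by rewrite mulr_suml; apply: eq_bigr => i _; rewrite mulr_sumr.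
have SySx : \sum_i \sum_j x j ^+ 2 * y i ^+ 2 = Sx * Sy.
  by rewrite exchange_big /= SxSy.
have Sxy2 : \sum_i \sum_j 2 * ((x i * y i) * (x j * y j)) = 2 * Sxy ^+ 2.
  rewrite expr2 mulr_suml mulr_sumr; apply: eq_bigr => i _.
  by rewrite !mulr_sumr; apply: eq_bigr => j _; ring.
have expand i j : (x i * y j - x j * y i) ^+ 2 =
    x i ^+ 2 * y j ^+ 2 + x j ^+ 2 * y i ^+ 2 - 2 * ((x i * y i) * (x j * y j)).
  by ring.
have lagrange : \sum_i \sum_j (x i * y j - x j * y i) ^+ 2 = 2 * (Sx * Sy - Sxy ^+ 2).
  under eq_bigr => i _ do under eq_bigr => j _ do rewrite expand.
  under eq_bigr => i _ do rewrite sumrB big_split /=.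
  by rewrite sumrB big_split /= SxSy SySx Sxy2; ring.
have : 0 <= \sum_i \sum_j (x i * y j - x j * y i) ^+ 2.
  by apply: sumr_ge0 => i _; apply: sumr_ge0 => j _; exact: sqr_ge0.
rewrite lagrange; lra.
Qed.

Lemma sum_dffun_prod {R : comPzRingType} {I : finType} {T_ : I -> finType}
  (f : forall i, T_ i -> R) :
  \sum_(a : {dffun forall i, T_ i}) \prod_i f i (a i) = \prod_i \sum_(x : T_ i) f i x.
Proof.
pose P_ i := [ffun x : T_ i => f i x].
transitivity (\prod_i \sum_(x : T_ i) P_ i x); last first.
  by apply: eq_bigr => i _; apply: eq_bigr => x _; rewrite ffunE.
under eq_bigr => i _ do rewrite (big_tag (fun i => P_ i) i).
rewrite (bigA_distr_big_dep _ (fun i j => untag 0 (P_ i) j)) -(big_fprod _ _ P_).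
rewrite (reindex (@dffun_of_fprod _ T_)); last exact/onW_bij/dffun_of_fprod_bij.
by apply: eq_bigr => t _; apply: eq_bigr => i _; rewrite /dffun_of_fprod !ffunE.
Qed.

Lemma sum_norm_kernel_le {R : realDomainType} {T U : finType} (M : T -> U -> R)
    (f : T -> R) (D : R) :
  (forall t, \sum_u `|M t u| <= D) ->
  \sum_u `|\sum_t f t * M t u| <= D * \sum_t `|f t|.
Proof.
move=> M_l1; apply: (@le_trans _ _ (\sum_u \sum_t `|f t| * `|M t u|)).
  apply: ler_sum => u _; apply: le_trans (ler_norm_sum _ _ _) _.
  by under eq_bigr do rewrite normrM.
rewrite exchange_big mulr_sumr /=; apply: ler_sum => t _.
by rewrite -mulr_sumr mulrC ler_wpM2r.
Qed.

Lemma cvg_sum {R : realType} {I : finType} (u : I -> nat -> R) (l : I -> R) :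
  (forall i, u i N @[N --> \oo] --> l i) -> \sum_i u i N @[N --> \oo] --> \sum_i l i.
Proof. by move=> cvg_u; apply: (cvg_big (U := R)) => // *; exact: add_continuous. Qed.

Lemma penalty_fin_ge0 {R : realType} [L C x : R] [K : \bar R] :
  0 <= C -> (x%:E <= K)%E -> (0 <= L%:E - C%:E * K)%E -> 0 <= L - C * x.
Proof.
move=> C_ge0; case: K => [k | | ] //.
- rewrite lee_fin => x_le_k; rewrite -EFinM -EFinB lee_fin => /le_trans; apply.
  by rewrite lerD2l lerN2 ler_wpM2l.
- move=> _; have [-> | C_neq0] := eqVneq C 0.
    by rewrite mul0r subr0 mul0e sube0 lee_fin.
  have C_gt0 : 0 < C by rewrite lt_def C_neq0.
  by rewrite mulry (gtr0_sg C_gt0) mul1e (_ : (- +oo)%E = -oo%E) // addeNy leeNy_eq.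
Qed.

Lemma le_chain {disp : Order.disp_t} {T : porderType disp} (f : nat -> T) (N : nat) :
  (forall m, (m < N)%N -> (f m <= f m.+1)%O) -> (f 0%N <= f N)%O.
Proof.
elim: N => // N IH f_step; apply: le_trans (f_step N (ltnSn N)).
by apply: IH => m lt_mN; apply: f_step; rewrite ltnS ltnW.
Qed.

Definition is_dist {R : numDomainType} {T : finType} (mu : T -> R) : Prop :=
  (forall a, 0 <= mu a) /\ \sum_a mu a = 1.

Section KullbackLeibler.
Context {R : realType} {T : finType}.
Implicit Types mu nu : T -> R.

Definition hellinger mu nu : R :=
  \sum_a (Num.sqrt (mu a) - Num.sqrt (nu a)) ^+ 2.

Lemma ln_le_subr1 [x : R] : 0 < x -> ln x <= x - 1.
Proof.
by move=> x_gt0; have := @le_ln1Dx R (x - 1); rewrite addrCA subrr addr0; apply; lra.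
Qed.

Lemma mul_ln_div_ge (x y : R) : 0 < x -> 0 < y ->
  2 * (x - Num.sqrt x * Num.sqrt y) <= x * ln (x / y).
Proof.
move=> x_gt0 y_gt0; set u := Num.sqrt x; set v := Num.sqrt y.
have u_gt0 : 0 < u by rewrite sqrtr_gt0.
have v_gt0 : 0 < v by rewrite sqrtr_gt0.
have x_sqr : x = u ^+ 2 by rewrite sqr_sqrtr // ltW.
have ln_uv : 1 - v / u <= ln (u / v).
  have := ln_le_subr1 (divr_gt0 v_gt0 u_gt0).
  by rewrite -[v / u]invf_div lnV ?posrE ?divr_gt0 //; lra.
have y_sqr : y = v ^+ 2 by rewrite sqr_sqrtr // ltW.
rewrite {3}x_sqr y_sqr -expr_div_n lnXn ?divr_gt0 // mulr2n.
have -> : x - u * v = x * (1 - v / u) by rewrite x_sqr; field; exact: lt0r_neq0.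
nra.
Qed.

Lemma hellinger_le_KL [mu nu] : is_dist mu -> is_dist nu ->
  ((hellinger mu nu)%:E <= KL R T mu nu)%E.
Proof.
move=> [mu_ge0 mu_sum1] [nu_ge0 nu_sum1].
pose u a : R := Num.sqrt (mu a); pose v a : R := Num.sqrt (nu a).
have -> : hellinger mu nu = \sum_a 2 * (mu a - u a * v a).
  apply/eqP; rewrite -subr_eq0 -sumrB; apply/eqP.
  transitivity (\sum_a (nu a - mu a)); last by rewrite sumrB mu_sum1 nu_sum1 subrr.
  apply: eq_bigr => a _.
  by rewrite -[in RHS](sqr_sqrtr (mu_ge0 a)) -[in RHS](sqr_sqrtr (nu_ge0 a))
             -{2}(sqr_sqrtr (mu_ge0 a)) /u /v; ring.
rewrite /KL -sumEFin; apply: lee_sum => a _.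
case: eqP => [mu0|/eqP mu_neq0].
  by rewrite /u mu0 sqrtr0 mul0r subrr mulr0.
case: eqP => [_|/eqP nu_neq0]; first exact: leey.
by rewrite lee_fin; apply: mul_ln_div_ge; rewrite lt_def ?mu_neq0 ?nu_neq0 ?mu_ge0 ?nu_ge0.
Qed.

Lemma sqr_l1_le_hellinger [mu nu] : is_dist mu -> is_dist nu ->
  (\sum_a `|nu a - mu a|) ^+ 2 <= 4 * hellinger mu nu.
Proof.
move=> [mu_ge0 mu_sum1] [nu_ge0 nu_sum1].
pose u a : R := Num.sqrt (mu a); pose v a : R := Num.sqrt (nu a).
have u_ge0 a : 0 <= u a by exact: sqrtr_ge0.
have v_ge0 a : 0 <= v a by exact: sqrtr_ge0.
have mu_sqr a : mu a = u a ^+ 2 by rewrite sqr_sqrtr.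
have nu_sqr a : nu a = v a ^+ 2 by rewrite sqr_sqrtr.
have -> : \sum_a `|nu a - mu a| = \sum_a `|u a - v a| * (u a + v a).
  apply: eq_bigr => a _; rewrite mu_sqr nu_sqr.
  rewrite (_ : v a ^+ 2 - u a ^+ 2 = (v a - u a) * (u a + v a)); last by ring.
  by rewrite normrM distrC (ger0_norm (addr_ge0 (u_ge0 a) (v_ge0 a))).
apply: le_trans (sqr_sum_mul_le (fun a => `|u a - v a|) (fun a => u a + v a)) _.
have -> : \sum_a `|u a - v a| ^+ 2 = hellinger mu nu.
  by apply: eq_bigr => a _; rewrite real_normK // num_real.
have sum_sqr_le4 : \sum_a (u a + v a) ^+ 2 <= 4.
  have <- : \sum_a (2 * mu a + 2 * nu a) = 4.
    by rewrite big_split /= -!mulr_sumr mu_sum1 nu_sum1; lra.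
  by apply: ler_sum => a _; rewrite mu_sqr nu_sqr; have := sqr_ge0 (u a - v a); nra.
rewrite mulrC; apply: ler_wpM2r sum_sqr_le4.
by apply: sumr_ge0 => a _; exact: sqr_ge0.
Qed.

Lemma KL_ge_sqr_l1 [mu nu] : is_dist mu -> is_dist nu ->
  (((\sum_a `|nu a - mu a|) ^+ 2 / 4)%:E <= KL R T mu nu)%E.
Proof.
move=> mu_dist nu_dist; apply: le_trans _ (hellinger_le_KL mu_dist nu_dist).
by rewrite lee_fin ler_pdivrMr // mulrC; exact: sqr_l1_le_hellinger.
Qed.

Lemma KL_self mu : KL R T mu mu = 0%E.
Proof.
(* the [0%E] seeding [KL] is not syntactically the zero that [adde0] rewrites *)
have adde0' (y : \bar R) : adde y 0%E = y by exact: adde0.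
apply: (big_rec (fun x => x = 0%E)) => // a x _ ->; rewrite adde0'.
by case: eqP => // /eqP mu_neq0; rewrite (divff mu_neq0) ln1 mulr0.
Qed.

End KullbackLeibler.

Section DiscountedMarkovChain.
Context {R : realType} {S : finType}.
Variable gamma : R.
Hypotheses (gamma_ge0 : 0 <= gamma) (gamma_lt1 : gamma < 1).
Implicit Types (M : S -> S -> R) (mu f : S -> R).

Definition stochastic M : Prop := forall s, is_dist (M s).

Definition dirac (s0 : S) : S -> R := fun s => (s == s0)%:R.

Definition push M mu : S -> R := fun s' => \sum_s mu s * M s s'.

Definition mdist M mu (t : nat) : S -> R := iter t (push M) mu.

Definition occ_partial M mu (N : nat) (s : S) : R :=
  \sum_(0 <= t < N) gamma ^+ t * mdist M mu t s.

Definition occ M mu (s : S) : R :=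
  \big[+%R/0%R]_(0 <= t <oo) (gamma ^+ t * mdist M mu t s).

Lemma mdistS M mu t : mdist M mu t.+1 = push M (mdist M mu t).
Proof. by []. Qed.

Lemma dirac_dist s0 : is_dist (dirac s0).
Proof.
split=> [s|]; first by rewrite ler0n.
by rewrite (bigD1 s0) //= /dirac eqxx big1 ?addr0 // => s /negbTE ->.
Qed.

Lemma sum_dirac_mull f s0 : \sum_s dirac s0 s * f s = f s0.
Proof.
by rewrite (bigD1 s0) //= /dirac eqxx mul1r big1 ?addr0 // => s /negbTE ->; rewrite mul0r.
Qed.

Lemma sum_dirac_mulr f s : \sum_s0 f s0 * dirac s0 s = f s.
Proof.
rewrite (bigD1 s) //= /dirac eqxx mulr1 big1 ?addr0 // => s0 s0_neq.
by rewrite eq_sym (negbTE s0_neq) mulr0.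
Qed.

Lemma push_dirac M s0 : push M (dirac s0) = M s0.
Proof. by apply: funext => s'; exact: sum_dirac_mull. Qed.

Lemma sum_geometric_le N : \sum_(0 <= t < N) gamma ^+ t <= (1 - gamma)^-1.
Proof.
have gamma_lt1' : 0 < 1 - gamma by rewrite subr_gt0.
rewrite -(ler_pM2l gamma_lt1') mulfV ?gt_eqF // big_mkord -opprB mulNr -subrX1.
by rewrite opprB lerBlDr lerDl exprn_ge0.
Qed.

Section Stochastic.
Variable M : S -> S -> R.
Hypothesis M_stoch : stochastic M.

Lemma sum_push f : \sum_s' push M f s' = \sum_s f s.
Proof.
rewrite /push exchange_big /=; apply: eq_bigr => s _.
by rewrite -mulr_sumr (M_stoch s).2 mulr1.
Qed.

Lemma push_dist [mu] : is_dist mu -> is_dist (push M mu).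
Proof.
move=> [mu_ge0 mu_sum1]; split=> [s'|]; last by rewrite sum_push.
by apply: sumr_ge0 => s _; apply: mulr_ge0 => //; exact: (M_stoch s).1.
Qed.

Lemma mdist_dist [mu] t : is_dist mu -> is_dist (mdist M mu t).
Proof. by move=> mu_dist; elim: t => //= t; exact: push_dist. Qed.

Lemma mdist_linear mu t s : mdist M mu t s = \sum_s0 mu s0 * mdist M (dirac s0) t s.
Proof.
elim: t s => [|t IH] s; first by rewrite /= sum_dirac_mulr.
rewrite mdistS {1}/push; under [RHS]eq_bigr => s0 _ do rewrite mdistS /push mulr_sumr.
rewrite [RHS]exchange_big; apply: eq_bigr => s1 _ /=.
by rewrite IH mulr_suml; apply: eq_bigr => s0 _; rewrite mulrA.
Qed.

Lemma occ_partialS_fix mu N s' :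
  occ_partial M mu N.+1 s' = mu s' + gamma * push M (occ_partial M mu N) s'.
Proof.
rewrite /occ_partial big_nat_recl // expr0 mul1r; congr (_ + _).
rewrite /push mulr_sumr; under [RHS]eq_bigr => s _ do rewrite mulr_suml mulr_sumr.
rewrite exchange_big; apply: eq_bigr => t _.
by rewrite mdistS /push mulr_sumr; apply: eq_bigr => s _; rewrite exprS; ring.
Qed.

Lemma occ_partialS_shift mu N s :
  occ_partial M mu N.+1 s = mu s + gamma * occ_partial M (push M mu) N s.
Proof.
rewrite /occ_partial big_nat_recl // expr0 mul1r; congr (_ + _).
by rewrite mulr_sumr; apply: eq_bigr => t _; rewrite /mdist iterSr exprS mulrA.
Qed.

Lemma occ_partial_linear mu N s :
  occ_partial M mu N s = \sum_s0 mu s0 * occ_partial M (dirac s0) N s.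
Proof.
rewrite /occ_partial; under eq_bigr => t _ do rewrite mdist_linear mulr_sumr.
rewrite exchange_big; apply: eq_bigr => s0 _; rewrite mulr_sumr.
by apply: eq_bigr => t _; rewrite mulrCA.
Qed.

Lemma cvg_occ [mu] s : is_dist mu -> occ_partial M mu N s @[N --> \oo] --> occ M mu s.
Proof.
move=> mu_dist; have term_ge0 t : 0 <= gamma ^+ t * mdist M mu t s.
  by rewrite mulr_ge0 ?exprn_ge0 // (mdist_dist t mu_dist).1.
apply: nondecreasing_is_cvgn.
  move=> N N' le_NN'; rewrite /occ_partial (big_cat_nat (leq0n N) le_NN') /= lerDl.
  by apply: sumr_ge0 => t _.
exists (1 - gamma)^-1 => _ [N _ <-]; apply: le_trans (sum_geometric_le N).
apply: ler_sum => t _; rewrite ler_piMr ?exprn_ge0 //.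
have [mdist_ge0 <-] := mdist_dist t mu_dist.
by rewrite (bigD1 s) //= lerDl sumr_ge0.
Qed.

Lemma occ_ge0 [mu] s : is_dist mu -> 0 <= occ M mu s.
Proof.
move=> mu_dist; apply: cvgr_to_ge (cvg_occ s mu_dist) _; apply: nearW => N.
by apply: sumr_ge0 => t _; rewrite mulr_ge0 ?exprn_ge0 // (mdist_dist t mu_dist).1.
Qed.

Lemma occ_fix [mu] s' : is_dist mu ->
  occ M mu s' = mu s' + gamma * push M (occ M mu) s'.
Proof.
move=> mu_dist; apply: (cvg_lim (@Rhausdorff R)).
rewrite -cvg_shiftS (eq_cvg _ _ (fun N => occ_partialS_fix mu N s')).
apply: cvgD; first exact: cvg_cst.
by apply: cvgMr; rewrite /push; apply: cvg_sum => s; apply: cvgMl; exact: cvg_occ.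
Qed.

Lemma occ_shift [mu] s : is_dist mu -> occ M mu s = mu s + gamma * occ M (push M mu) s.
Proof.
move=> mu_dist; apply: (cvg_lim (@Rhausdorff R)).
rewrite -cvg_shiftS (eq_cvg _ _ (fun N => occ_partialS_shift mu N s)).
apply: cvgD; first exact: cvg_cst.
by apply: cvgMr; apply: cvg_occ; exact: push_dist.
Qed.

Lemma occ_linear [mu] s : is_dist mu -> occ M mu s = \sum_s0 mu s0 * occ M (dirac s0) s.
Proof.
move=> mu_dist; apply: (cvg_lim (@Rhausdorff R)).
rewrite (eq_cvg _ _ (fun N => occ_partial_linear mu N s)).
by apply: cvg_sum => s0; apply: cvgMr; apply: cvg_occ; exact: dirac_dist.
Qed.

Lemma sum_occ [mu] : is_dist mu -> \sum_s occ M mu s = (1 - gamma)^-1.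
Proof.
move=> mu_dist; have gamma_neq1 : 1 - gamma != 0 by rewrite subr_eq0 eq_sym lt_eqF.
have sum_fix : \sum_s occ M mu s = 1 + gamma * \sum_s occ M mu s.
  transitivity (\sum_s (mu s + gamma * push M (occ M mu) s)).
    by apply: eq_bigr => s _; exact: occ_fix.
  by rewrite big_split /= mu_dist.2 -mulr_sumr sum_push.
apply: (mulIf gamma_neq1); rewrite (mulVf gamma_neq1) mulrBr mulr1 {1}sum_fix; ring.
Qed.

Lemma discounted_series_occ [mu] (f : S -> R) : is_dist mu ->
  \big[+%R/0%R]_(0 <= t <oo) (gamma ^+ t * \sum_s mdist M mu t s * f s) =
  \sum_s occ M mu s * f s.
Proof.
move=> mu_dist; apply: (cvg_lim (@Rhausdorff R)).
have partial_eq N : \sum_(0 <= t < N) gamma ^+ t * \sum_s mdist M mu t s * f s =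
    \sum_s occ_partial M mu N s * f s.
  rewrite /occ_partial; under eq_bigr => t _ do rewrite mulr_sumr.
  rewrite exchange_big; apply: eq_bigr => s _; rewrite mulr_suml.
  by apply: eq_bigr => t _; rewrite mulrA.
rewrite (eq_cvg _ _ partial_eq).
by apply: cvg_sum => s; apply: cvgMl; exact: cvg_occ.
Qed.
End Stochastic.

Lemma occ_l1_perturbation [M M' mu D] :
  stochastic M -> stochastic M' -> is_dist mu ->
  (forall s, \sum_s' `|M' s s' - M s s'| <= D) ->
  \sum_s `|occ M' mu s - occ M mu s| <= gamma * D / (1 - gamma) ^+ 2.
Proof.
move=> M_stoch M'_stoch mu_dist M_close.
have gamma_lt1' : 0 < 1 - gamma by rewrite subr_gt0.
set occ' := occ M' mu; set X := \sum_s `|occ' s - occ M mu s|.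
have diff_fix s' : occ' s' - occ M mu s' = gamma *
    (push (fun s s'' => M' s s'' - M s s'') occ' s' + push M (occ' \- occ M mu) s').
  rewrite /occ' (occ_fix _ M'_stoch) // [occ M mu s'](occ_fix _ M_stoch) //.
  rewrite opprD addrACA subrr add0r -mulrBr; congr (_ * _).
  by rewrite /push -big_split -sumrB; apply: eq_bigr => s _ /=; ring.
have first_le : \sum_s' `|push (fun s s'' => M' s s'' - M s s'') occ' s'| <= D / (1 - gamma).
  rewrite /push; apply: le_trans (sum_norm_kernel_le _ occ' _ M_close) _.
  under eq_bigr => s _ do rewrite ger0_norm ?(occ_ge0 _ M'_stoch) //.
  by rewrite (sum_occ _ M'_stoch).
have second_le : \sum_s' `|push M (occ' \- occ M mu) s'| <= X.
  rewrite /push -[X]mul1r; apply: (sum_norm_kernel_le M) => s.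
  by under eq_bigr => s' _ do rewrite ger0_norm ?(M_stoch s).1 //; rewrite (M_stoch s).2.
have X_le : X <= gamma * (D / (1 - gamma) + X).
  rewrite {1}/X; under eq_bigr => s' _ do rewrite diff_fix normrM (ger0_norm gamma_ge0).
  rewrite -mulr_sumr ler_wpM2l //; apply: le_trans (ler_sum _ (fun s' _ => ler_normD _ _)) _.
  by rewrite big_split /= lerD.
rewrite expr2 invfM mulrA ler_pdivlMr // -mulrA; move: X_le; set c := D / (1 - gamma).
nra.
Qed.

Section MarkovGame.
Context {n : nat} {A : 'I_n -> finType}.
Variables (r : S -> jact A -> R) (P : S -> jact A -> S -> R) (d : S -> R).
Hypotheses (P_dist : forall s a, is_dist (P s a)) (d_dist : is_dist d).
Implicit Types (p q : jpol R S A) (s : S) (a : jact A).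

Local Notation jprob := (jprob R S n A).
Local Notation ret := (ret R S n A r P gamma).
Local Notation V := (V R S n A r P gamma).
Local Notation Q := (Q R S n A r P gamma).
Local Notation Adv := (Adv R S n A r P gamma).
Local Notation J := (J r P d gamma).
Local Notation rho := (rho R S n A P d gamma).
Local Notation Ai := (Ai R S n A r P gamma).
Local Notation surr := (surr R S n A r P d gamma).
Local Notation eps := (eps R S n A r P gamma).
Local Notation Cst := (Cst R S n A r P gamma).
Local Notation DmaxKL := (DmaxKL R S n A).
Local Notation Fobj := (Fobj r P d gamma).

Definition joint_policy p : Prop := forall i, is_policy (p i).

Definition trans p s s' : R := \sum_a jprob p s a * P s a s'.

Definition preward p s : R := \sum_a jprob p s a * r s a.

Definition adv_gain p q s : R := \sum_a jprob q s a * Adv p s a.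

Definition l1_dist p q s : R := \sum_a `|jprob q s a - jprob p s a|.

Lemma jprob_dist [p] s : joint_policy p -> is_dist (jprob p s).
Proof.
move=> p_pol; split=> [a|]; first by apply: prodr_ge0 => i _; exact: (p_pol i s).1.
rewrite (sum_dffun_prod (fun i x => p i s x)).
by apply: big1 => i _; exact: (p_pol i s).2.
Qed.

Lemma trans_stochastic [p] : joint_policy p -> stochastic (trans p).
Proof.
move=> p_pol s; have [jp_ge0 jp_sum1] := jprob_dist s p_pol.
split=> [s'|].
  by apply: sumr_ge0 => a _; rewrite mulr_ge0 // (P_dist s a).1.
rewrite /trans exchange_big /= -jp_sum1; apply: eq_bigr => a _.
by rewrite -mulr_sumr (P_dist s a).2 mulr1.
Qed.

Lemma stdist_mdist p mu : stdist R S n A P p mu = mdist (trans p) mu.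
Proof. by apply: funext => t; elim: t => //= t ->. Qed.

Lemma rho_occ p : rho p = occ (trans p) d.
Proof. by rewrite /rho stdist_mdist. Qed.

Section Policy.
Context {p : jpol R S A}.
Hypothesis p_pol : joint_policy p.

Lemma ret_occ [mu] : is_dist mu -> ret p mu = \sum_s occ (trans p) mu s * preward p s.
Proof.
move=> mu_dist; rewrite /ret stdist_mdist.
exact: (discounted_series_occ _ (trans_stochastic p_pol)).
Qed.

Lemma ret_linear [mu] : is_dist mu -> ret p mu = \sum_s mu s * V p s.
Proof.
move=> mu_dist; rewrite ret_occ //.
under eq_bigr => s _ do rewrite (occ_linear _ (trans_stochastic p_pol) s mu_dist) mulr_suml.
rewrite exchange_big; apply: eq_bigr => s0 _ /=.
rewrite /V (ret_occ (dirac_dist s0)) mulr_sumr.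
by apply: eq_bigr => s _; rewrite mulrA.
Qed.

Lemma V_bellman s : V p s = preward p s + gamma * \sum_s' trans p s s' * V p s'.
Proof.
have p_stoch := trans_stochastic p_pol.
rewrite [LHS](ret_occ (dirac_dist s)).
under eq_bigr => s1 _ do rewrite (occ_shift _ p_stoch _ (dirac_dist s)) mulrDl.
rewrite big_split /= sum_dirac_mull push_dirac -(ret_linear (p_stoch s)).
rewrite (ret_occ (p_stoch s)) mulr_sumr.
by congr (_ + _); apply: eq_bigr => s1 _; rewrite mulrA.
Qed.

Lemma Q_bellman s a : Q p s a = r s a + gamma * \sum_s' P s a s' * V p s'.
Proof. by rewrite /Q ret_linear. Qed.

Lemma J_value : J p = \sum_s d s * V p s.
Proof. exact: ret_linear. Qed.

Lemma expected_Q q s :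
  \sum_a jprob q s a * Q p s a = preward q s + gamma * \sum_s' trans q s s' * V p s'.
Proof.
under eq_bigr => a _ do rewrite Q_bellman mulrDr.
rewrite big_split /=; congr (_ + _).
transitivity (\sum_a \sum_s' gamma * (jprob q s a * P s a s' * V p s')).
  by apply: eq_bigr => a _; rewrite !mulr_sumr; apply: eq_bigr => s' _; ring.
rewrite exchange_big mulr_sumr; apply: eq_bigr => s' _ /=.
by rewrite /trans mulr_suml mulr_sumr.
Qed.

Lemma adv_gain_bellman [q] s : joint_policy q ->
  adv_gain p q s = preward q s + gamma * \sum_s' trans q s s' * V p s' - V p s.
Proof.
move=> q_pol; rewrite /adv_gain /Adv; under eq_bigr => a _ do rewrite mulrBr.
by rewrite sumrB expected_Q -mulr_suml (jprob_dist s q_pol).2 mul1r.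
Qed.

Lemma adv_gain_self s : adv_gain p p s = 0.
Proof. by rewrite adv_gain_bellman // -V_bellman subrr. Qed.

End Policy.

Lemma performance_difference p q : joint_policy p -> joint_policy q ->
  J q - J p = \sum_s occ (trans q) d s * adv_gain p q s.
Proof.
move=> p_pol q_pol; have q_stoch := trans_stochastic q_pol.
have discounted_next : \sum_s occ (trans q) d s * (gamma * \sum_s' trans q s s' * V p s') =
    \sum_s (occ (trans q) d s - d s) * V p s.
  transitivity (\sum_s' gamma * push (trans q) (occ (trans q) d) s' * V p s').
    rewrite /push; under eq_bigr => s _ do rewrite !mulr_sumr.
    rewrite exchange_big; apply: eq_bigr => s' _ /=.
    by rewrite mulr_sumr mulr_suml; apply: eq_bigr => s _; ring.
  by apply: eq_bigr => s' _; rewrite [occ _ d s'](occ_fix _ q_stoch) //; ring.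
rewrite (J_value p_pol) /J (ret_occ q_pol d_dist).
under [RHS]eq_bigr => s _ do rewrite (adv_gain_bellman p_pol s q_pol) mulrBr mulrDr.
rewrite sumrB big_split /= discounted_next.
under [X in _ = _ + X - _]eq_bigr => s _ do rewrite mulrBl.
by rewrite sumrB; ring.
Qed.

Lemma adv_gain_le [p] q [s e] : joint_policy p -> (forall a, `|Adv p s a| <= e) ->
  `|adv_gain p q s| <= e * l1_dist p q s.
Proof.
move=> p_pol Adv_le.
have -> : adv_gain p q s = \sum_a (jprob q s a - jprob p s a) * Adv p s a.
  under [RHS]eq_bigr do rewrite mulrBl.
  by rewrite sumrB -/(adv_gain p q s) -/(adv_gain p p s) adv_gain_self // subr0.
rewrite /l1_dist mulr_sumr; apply: le_trans (ler_norm_sum _ _ _) _.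
by apply: ler_sum => a _; rewrite normrM mulrC ler_wpM2r.
Qed.

Lemma l1_trans_le p q s :
  \sum_s' `|trans q s s' - trans p s s'| <= l1_dist p q s.
Proof.
have -> : \sum_s' `|trans q s s' - trans p s s'| =
    \sum_s' `|\sum_a (jprob q s a - jprob p s a) * P s a s'|.
  apply: eq_bigr => s' _; rewrite /trans -sumrB.
  by congr `|_|; apply: eq_bigr => a _; rewrite mulrBl.
rewrite -[l1_dist p q s]mul1r; apply: (sum_norm_kernel_le (P s)) => a.
by under eq_bigr => s' _ do rewrite ger0_norm ?(P_dist s a).1 //; rewrite (P_dist s a).2.
Qed.

Lemma policy_improvement_bound [p q e D] : joint_policy p -> joint_policy q ->
  0 <= e -> 0 <= D -> (forall s a, `|Adv p s a| <= e) -> (forall s, l1_dist p q s <= D) ->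
  \sum_s rho p s * adv_gain p q s - e * gamma * D ^+ 2 / (1 - gamma) ^+ 2 <= J q - J p.
Proof.
move=> p_pol q_pol e_ge0 D_ge0 Adv_le l1_le.
rewrite performance_difference // rho_occ.
have drift_le : `|\sum_s (occ (trans q) d s - occ (trans p) d s) * adv_gain p q s|
    <= e * gamma * D ^+ 2 / (1 - gamma) ^+ 2.
  apply: le_trans (ler_norm_sum _ _ _) _.
  apply: (@le_trans _ _ (\sum_s `|occ (trans q) d s - occ (trans p) d s| * (e * D))).
    apply: ler_sum => s _; rewrite normrM ler_wpM2l //.
    by apply: le_trans (adv_gain_le q p_pol (Adv_le s)) _; rewrite ler_wpM2l.
  have occ_close := occ_l1_perturbation (trans_stochastic p_pol) (trans_stochastic q_pol)
    d_dist (fun s => le_trans (l1_trans_le p q s) (l1_le s)).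
  rewrite -mulr_suml (_ : e * gamma * D ^+ 2 / (1 - gamma) ^+ 2 =
    gamma * D / (1 - gamma) ^+ 2 * (e * D)); last by ring.
  by rewrite ler_wpM2r ?mulr_ge0.
move: drift_le; rewrite ler_norml => /andP[+ _].
have -> : \sum_s (occ (trans q) d s - occ (trans p) d s) * adv_gain p q s =
    \sum_s occ (trans q) d s * adv_gain p q s - \sum_s occ (trans p) d s * adv_gain p q s.
  by rewrite -sumrB; apply: eq_bigr => s _; rewrite mulrBl.
lra.
Qed.

Lemma card_state_gt0 : (0 < #|S|)%N.
Proof.
rewrite lt0n; apply/negP => /eqP/card0_eq S_empty; have := d_dist.2.
by rewrite big_pred0 // => /eqP; rewrite eq_sym oner_eq0.
Qed.

Definition unilateral i p q : Prop := forall j, j != i -> q j = p j.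

Lemma jprob_unilateral [p q i] s a : unilateral i p q ->
  jprob q s a = q i s (a i) * \prod_(j < n | j != i) p j s (a j).
Proof.
by move=> q_p; rewrite /jprob (bigD1 i) //=; congr (_ * _); apply: eq_bigr => j /q_p ->.
Qed.

Lemma sum_prod_others [p] s [i] (ai : A i) : joint_policy p ->
  \sum_(a : jact A | a i == ai) \prod_(j < n | j != i) p j s (a j) = 1.
Proof.
move=> p_pol.
(* agent i's factor is replaced by the indicator of ai *)
pose f j (x : A j) : R := if j == i then (Tagged A x == Tagged A ai)%:R else p j s x.
transitivity (\sum_(a : jact A) \prod_j f j (a j)).
  rewrite [LHS]big_mkcond /=; apply: eq_bigr => a _.
  rewrite [RHS](bigD1 i) //= /f eqxx eq_Tagged /=.
  rewrite [X in _ = _ * X](eq_bigr (fun j => p j s (a j))); last by move=> j /negbTE ->.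
  by case: (a i == ai); rewrite ?mul1r ?mul0r.
rewrite sum_dffun_prod; apply: big1 => j _; rewrite /f.
case: (eqVneq j i) => [->|_]; last exact: (p_pol j s).2.
under eq_bigr => x _ do rewrite eq_Tagged /=.
by rewrite (bigD1 ai) //= eqxx big1 ?addr0 // => x /negbTE ->.
Qed.

Lemma l1_dist_unilateral [p q i] s : joint_policy p -> unilateral i p q ->
  l1_dist p q s = \sum_(ai : A i) `|q i s ai - p i s ai|.
Proof.
move=> p_pol q_p; rewrite /l1_dist (partition_big (fun a : jact A => a i) xpredT) //=.
apply: eq_bigr => ai _; rewrite -[RHS]mulr1 -(sum_prod_others s ai p_pol) mulr_sumr.
apply: eq_bigr => a /eqP ai_eq.
rewrite (jprob_unilateral _ _ q_p) (@jprob_unilateral p p i s a) // -mulrBl normrM ai_eq.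
by rewrite [X in _ * X]ger0_norm // prodr_ge0 // => j _; exact: (p_pol j s).1.
Qed.

Lemma sum_Ai_unilateral [p q i] s : joint_policy q -> unilateral i p q ->
  \sum_(ai : A i) q i s ai * Ai p i s ai = adv_gain p q s.
Proof.
move=> q_pol q_p; rewrite /Ai /adv_gain /Adv.
under eq_bigr do rewrite mulrBr; under [RHS]eq_bigr do rewrite mulrBr.
rewrite !sumrB -!mulr_suml (jprob_dist s q_pol).2 (q_pol i s).2; congr (_ - _).
rewrite (partition_big (fun a : jact A => a i) xpredT) //=; apply: eq_bigr => ai _.
rewrite /Qi mulr_sumr; apply: eq_bigr => a /eqP ai_eq.
by rewrite (jprob_unilateral _ _ q_p) ai_eq mulrA.
Qed.

Lemma surr_unilateral [p q i] : joint_policy q -> unilateral i p q ->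
  surr p i (q i) = \sum_s rho p s * adv_gain p q s.
Proof.
by move=> q_pol q_p; apply: eq_bigr => s _; rewrite sum_Ai_unilateral.
Qed.

Lemma Adv_le_eps p s a : `|Adv p s a| <= eps p.
Proof.
apply: le_trans (le_bigmax 0 (fun a => `|Adv p s a|) a) _.
exact: (le_bigmax 0 (fun s => \big[Num.max/0]_a `|Adv p s a|) s).
Qed.

Lemma eps_ge0 p : 0 <= eps p.
Proof. exact: bigmax_ge_id. Qed.

Lemma DmaxKL_self i (mu : apol R S A i) : DmaxKL i mu mu = 0%E.
Proof.
have /card_gt0P[s0 _] := card_state_gt0.
apply/eqP; rewrite eq_le; apply/andP; split.
  by apply: bigmax_le => // s _; rewrite KL_self.
by rewrite -(KL_self (mu s0)); exact: le_bigmax.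
Qed.

Lemma Fobj_self [p] i : joint_policy p -> Fobj p i (p i) = 0%E.
Proof.
move=> p_pol; rewrite /Fobj DmaxKL_self mule0 sube0 (surr_unilateral p_pol) //.
by under eq_bigr do rewrite adv_gain_self // mulr0; rewrite big1.
Qed.

Lemma Fobj_ge0_improves [p q i] : joint_policy p -> joint_policy q -> unilateral i p q ->
  (0 <= Fobj p i (q i))%E -> J p <= J q.
Proof.
move=> p_pol q_pol q_p F_ge0.
have /card_gt0P[s0 _] := card_state_gt0.
have [smax _ l1_le] := @arg_maxP _ _ S s0 xpredT (l1_dist p q) isT.
set D := l1_dist p q smax.
have D_ge0 : 0 <= D by apply: sumr_ge0 => a _.
have KL_le : ((D ^+ 2 / 4)%:E <= DmaxKL i (p i) (q i))%E.
  rewrite /DmaxKL; apply: le_trans _ (le_bigmax _ (fun s => KL R (A i) (p i s) (q i s)) smax).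
  rewrite /D (l1_dist_unilateral _ p_pol q_p).
  exact: KL_ge_sqr_l1 (p_pol i smax) (q_pol i smax).
have C_ge0 : 0 <= Cst p.
  by rewrite /Cst divr_ge0 ?mulr_ge0 ?eps_ge0 ?exprn_ge0 // subr_ge0 ltW.
have := policy_improvement_bound p_pol q_pol (eps_ge0 p) D_ge0 (@Adv_le_eps p)
  (fun s => l1_le s isT).
have := penalty_fin_ge0 C_ge0 KL_le F_ge0.
have -> : Cst p * (D ^+ 2 / 4) = eps p * gamma * D ^+ 2 / (1 - gamma) ^+ 2.
  by rewrite /Cst; field; rewrite subr_eq0 eq_sym lt_eqF.
rewrite (surr_unilateral q_pol q_p); lra.
Qed.

Section InterleavedScheme.
Variable K : 'I_n -> nat.
Variables (pik : nat -> jpol R S A) (micro : nat -> forall i : 'I_n, nat -> apol R S A i).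
Hypotheses (pi0_pol : forall i, is_policy (pik 0%N i))
  (micro0 : forall k i, micro k i 0%N = pik k i)
  (microK : forall k i, pik k.+1 i = micro k i (K i))
  (argmax_pol : forall k i j, (j < K i)%N -> is_policy (micro k i j.+1))
  (argmax_max : forall k i j, (j < K i)%N ->
     forall phat : apol R S A i, is_policy phat ->
       (Fobj (baseline pik micro k i j) i phat
        <= Fobj (baseline pik micro k i j) i (micro k i j.+1))%E).

Local Notation Pi := (baseline pik micro).

Definition partially_updated k (m : nat) : jpol R S A :=
  fun i => if (i < m)%N then pik k.+1 i else pik k i.

Lemma micro_policy k i j : (j <= K i)%N -> is_policy (pik k i) -> is_policy (micro k i j).
Proof. by case: j => [_|j lt_jK _]; [rewrite micro0 | exact: argmax_pol]. Qed.

Lemma pik_policy k : joint_policy (pik k).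
Proof.
elim: k => [|k IH] i; first exact: pi0_pol.
by rewrite microK; exact: micro_policy.
Qed.

Lemma baseline_policy k i j : (j <= K i)%N -> joint_policy (Pi k i j).
Proof.
move=> le_jK l; rewrite /baseline /compl.
case: eqVneq => [->|_]; first exact/micro_policy/pik_policy.
by case: ifP => _; exact: pik_policy.
Qed.

Lemma Fobj_micro_ge0 k i j : (j < K i)%N -> (0 <= Fobj (Pi k i j) i (micro k i j.+1))%E.
Proof.
move=> lt_jK; have Pi_pol := baseline_policy k i j (ltnW lt_jK).
by rewrite -(Fobj_self i Pi_pol); exact: argmax_max.
Qed.

Lemma J_micro_mono k i j : (j < K i)%N -> J (Pi k i j) <= J (Pi k i j.+1).
Proof.
move=> lt_jK; apply: (Fobj_ge0_improves (i := i)).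
- exact/baseline_policy/ltnW.
- exact: baseline_policy.
- by move=> l /negbTE l_neq; rewrite /baseline l_neq.
- by rewrite {2}/baseline eqxx; exact: Fobj_micro_ge0.
Qed.

Lemma baseline_first k i : Pi k i 0 = partially_updated k i.
Proof.
apply: functional_extensionality_dep => l; rewrite /baseline /compl /partially_updated.
by case: eqVneq => [->|//]; rewrite micro0 ltnn.
Qed.

Lemma baseline_last k i : Pi k i (K i) = partially_updated k i.+1.
Proof.
apply: functional_extensionality_dep => l; rewrite /baseline /compl /partially_updated.
case: eqVneq => [->|l_neq]; first by rewrite -microK ltnSn.
rewrite [(l < i.+1)%N]ltnS [(l <= i)%N]leq_eqVlt.
by case: eqP => [/ord_inj l_eq | //]; rewrite l_eq eqxx in l_neq.
Qed.

Lemma J_round_mono k : J (pik k) <= J (pik k.+1).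
Proof.
have -> : pik k = partially_updated k 0.
  by apply: functional_extensionality_dep => l; rewrite /partially_updated ltn0.
have -> : pik k.+1 = partially_updated k n.
  by apply: functional_extensionality_dep => l; rewrite /partially_updated ltn_ord.
apply: (le_chain (fun m => J (partially_updated k m))) => m lt_mn.
rewrite -[m]/(nat_of_ord (Ordinal lt_mn)) -baseline_first -baseline_last.
by apply: (le_chain (fun j => J (Pi k _ j))) => j; exact: J_micro_mono.
Qed.

End InterleavedScheme.

End MarkovGame.

End DiscountedMarkovChain.

Theorem theorem1 (R : realType) (S : finType) (n : nat) (A : 'I_n -> finType)
  (r : S -> jact A -> R) (P : S -> jact A -> S -> R) (d : S -> R) (gamma : R)
  (P_ge0 : forall s a s', 0 <= P s a s')
  (P_sum1 : forall s a, \sum_(s' : S) P s a s' = 1)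
  (d_ge0 : forall s, 0 <= d s) (d_sum1 : \sum_(s : S) d s = 1)
  (gamma_ge0 : 0 <= gamma) (gamma_lt1 : gamma < 1)
  (K : 'I_n -> nat) (K_gt0 : forall i, (0 < K i)%N)
  (pik : nat -> jpol R S A)
  (micro : nat -> forall i : 'I_n, nat -> apol R S A i)
  (pi0_pol : forall i, is_policy (pik 0%N i))
  (micro0 : forall k i, micro k i 0%N = pik k i)
  (microK : forall k i, pik k.+1 i = micro k i (K i))
  (argmax_pol : forall k i j, (j < K i)%N -> is_policy (micro k i j.+1))
  (argmax_max : forall k i j, (j < K i)%N ->
     forall phat : apol R S A i, is_policy phat ->
       (Fobj r P d gamma (baseline pik micro k i j) i phat
        <= Fobj r P d gamma (baseline pik micro k i j) i (micro k i j.+1))%E) :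
  (forall k i j, (j < K i)%N ->
     (0 <= Fobj r P d gamma (baseline pik micro k i j) i (micro k i j.+1))%E) /\
  (forall k, J r P d gamma (pik k) <= J r P d gamma (pik k.+1)).
Proof.
have P_dist s a : is_dist (P s a) by split.
have d_dist : is_dist d by split.
split.
- exact: (Fobj_micro_ge0 _ gamma_ge0 gamma_lt1 _ _ _ P_dist d_dist _ _ _
    pi0_pol micro0 microK argmax_pol argmax_max).
- exact: (J_round_mono _ gamma_ge0 gamma_lt1 _ _ _ P_dist d_dist _ _ _
    pi0_pol micro0 microK argmax_pol argmax_max).
Qed.
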